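(* Let $\mathcal G=(\mathcal R,c,\mathcal S)$ be a singleton congestion game structure with feasible resource sets $\mathcal R^h$, $h\in\mathcal H$, let $\precsim$ be a weak order on $\mathcal H$ and $\Gamma^{\precsim}$ the associated region, and let $C$ be a cost class of $\precsim$. Then: (a) For every $\mu\in\Gamma^{\precsim}$ and every equilibrium load vector $x$ of $(\mathcal G,\mu)$, the vector $(x_r)_{r\in\mathcal R_C}$ is an equilibrium load vector of the single-commodity singleton game $(\mathcal G_C,\mu_C)$, where $\mu_C:=\sum_{h\in C}\mu^h$. (b) If, for every demand in $\mathbb R_+$, the game $\mathcal G_C$ has a unique equilibrium load vector, then for $\mu\in\Gamma^{\precsim}$ the equilibrium loads $x_r(\mu)$, $r\in\mathcal R_C$, are uniquely determined and can be written as $x_r(\mu)=F_r(\mu_C)$ for nondecreasing functions $F_r:\mathbb R_+\to\mathbb R$; equivalently, the family of maps $\{\mu\mapsto x_r(\mu): r\in\mathcal R_C\}$ is comonotonic on $\Gamma^{\precsim}$.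
   Context: A congestion game structure has a finite set $\mathcal R$ of resources with continuous nondecreasing costs $c_r:\mathbb R_+\to\mathbb R_+$ and a finite set $\mathcal H$ of commodities; it is a singleton congestion game when every feasible strategy of commodity $h$ is a single resource, so its strategy set is identified with a nonempty set $\mathcal R^h\subseteq\mathcal R$. For a demand $\mu\in\mathbb R_+^{\mathcal H}$, a feasible flow assigns $f^h_r\ge0$ to $r\in\mathcal R^h$ with $\sum_{r\in\mathcal R^h}f^h_r=\mu^h$; loads are $x_r=\sum_{h: r\in\mathcal R^h}f^h_r$. A Wardrop equilibrium is a feasible flow such that for each $h$ there is $\lambda^h$ with $c_r(x_r)=\lambda^h$ if $r\in\mathcal R^h$, $f^h_r>0$, and $c_r(x_r)\ge\lambda^h$ for all $r\in\mathcal R^h$; an equilibrium load vector is the load vector of a Wardrop equilibrium. The equilibrium costs $\lambda^h(\mu)$ do not depend on which equilibrium is chosen, so $\mu\mapsto\lambda(\mu)$ is well defined. For a weak order (complete preorder) $\precsim$ on $\mathcal H$, define $\Gamma^{\precsim}=\{\mu\in\mathbb R_+^{\mathcal H}: \lambda^h(\mu)\le\lambda^{h'}(\mu)\iff h\precsim h' \text{ for all } h,h'\in\mathcal H\}$. Write $h\sim h'$ if $h\precsim h'$ and $h'\precsim h$, and $h'\succ h$ if $h\precsim h'$ but not $h'\precsim h$. The equivalence classes of $\sim$ are the cost classes; for a cost class $C$, $h'\succ C$ means $h'\succ h$ for $h\in C$. Set $\mathcal R_C=\big(\bigcup_{h\in C}\mathcal R^h\big)\setminus\big(\bigcup_{h'\succ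 C}\mathcal R^{h'}\big)$. $\mathcal G_C$ denotes the singleton congestion game with resources $\mathcal R_C$ (same costs $c_r$) and a single commodity whose feasible strategies are all singletons $\{r\}$, $r\in\mathcal R_C$. A family of functions $\{\psi_i:\Omega\to\mathbb R\}_{i\in A}$ is comonotonic if $(\psi_i(\omega_1)-\psi_i(\omega_2))(\psi_j(\omega_1)-\psi_j(\omega_2))\ge0$ for all $i,j\in A$ and $\omega_1,\omega_2\in\Omega$. *)

From HB Require Import structures.
From mathcomp Require Import all_boot all_order all_algebra.
From mathcomp Require Import all_classical all_reals all_analysis.
Set Implicit Arguments. Unset Strict Implicit. Unset Printing Implicit Defensive.
Import Order.TTheory GRing.Theory Num.Theory.
Import numFieldNormedType.Exports.
Local Open Scope classical_set_scope.
Local Open Scope ring_scope.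

Section Singleton.
Variables (R : realType) (Res Com : finType).

(* A singleton congestion game structure: costs c r on R_+ and, for each
   commodity h, its set of feasible resources S h (= R^h). *)
Variables (c : Res -> R -> R) (S : Com -> {set Res}).

Definition feasible_flow (mu : Com -> R) (f : Com -> Res -> R) : Prop :=
  (forall h r, 0 <= f h r) /\
  (forall h r, r \notin S h -> f h r = 0) /\
  (forall h, \sum_(r in S h) f h r = mu h).

Definition load (f : Com -> Res -> R) (r : Res) : R :=
  \sum_(h : Com | r \in S h) f h r.

Definition wardrop (mu : Com -> R) (f : Com -> Res -> R) : Prop :=
  feasible_flow mu f /\
  forall h, exists lam : R, forall r, r \in S h ->
    (0 < f h r -> c r (load f r) = lam) /\ lam <= c r (load f r).

Definition eq_load (mu : Com -> R) (x : Res -> R) : Prop :=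
  exists f, wardrop mu f /\ forall r, x r = load f r.

Definition is_eqcost (x : Res -> R) (h : Com) (l : R) : Prop :=
  (exists2 r, r \in S h & c r (x r) = l) /\
  (forall r, r \in S h -> l <= c r (x r)).

End Singleton.

Definition good_costs (R : realType) (Res : Type) (c : Res -> R -> R) : Prop :=
  forall r, (forall t, 0 <= t -> 0 <= c r t) /\
            (forall s t, 0 <= s -> s <= t -> c r s <= c r t) /\
            {within [set t : R | 0 <= t], continuous (c r)}.

Definition weak_order (Com : Type) (le : rel Com) : Prop :=
  total le /\ transitive le.

Definition Gamma (R : realType) (Res Com : finType) (c : Res -> R -> R)
  (S : Com -> {set Res}) (le : rel Com) (mu : Com -> R) : Prop :=
  (forall h, 0 <= mu h) /\
  exists x (lam : Com -> R), eq_load c S mu x /\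
    (forall h, is_eqcost c S x h (lam h)) /\
    (forall h h', lam h <= lam h' <-> le h h').

Definition cost_class (Com : finType) (le : rel Com) (C : {set Com}) : Prop :=
  exists h0, C = [set h | le h h0 && le h0 h]%SET.

Definition above_class (Com : finType) (le : rel Com) (C : {set Com}) (h' : Com) : bool :=
  [exists h in C, le h h' && ~~ le h' h].

Definition RC (Res Com : finType) (S : Com -> {set Res}) (le : rel Com)
  (C : {set Com}) : {set Res} :=
  (\bigcup_(h in C) S h) :\: (\bigcup_(h' | above_class le C h') S h').

Definition SC (Res Com : finType) (S : Com -> {set Res}) (le : rel Com)
  (C : {set Com}) : unit -> {set Res} := fun _ => RC S le C.

Definition eq_load_C (R : realType) (Res Com : finType) (c : Res -> R -> R)
  (S : Com -> {set Res}) (le : rel Com) (C : {set Com}) (m : R) (y : Res -> R) : Prop :=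
  exists z, eq_load c (SC S le C) (fun _ => m) z /\
    forall r, r \in RC S le C -> z r = y r.

From HB Require Import structures.
From mathcomp Require Import all_boot all_order all_algebra.
From mathcomp Require Import all_classical all_reals all_analysis.
From mathcomp Require Import ring lra.
Import Order.TTheory GRing.Theory Num.Theory.
Local Open Scope ring_scope.
Set Implicit Arguments. Unset Strict Implicit.

(* 1. Wardrop equilibria of a game with nondecreasing costs all induce the
      same resource costs (variational inequality).  Hence on Gamma every
      equilibrium flow f is priced by levels lam ordered like le.
   2. For a cost class C = {h | h ~ h0}: commodities above C have a higher
      level and so avoid R_C; commodities below C have a lower level and
      cannot afford R_C; commodities of C pay lam h0 and use only R_C.  So
      the loads on R_C form a single-commodity equilibrium of demand
      sum_(h in C) mu h, which is part (a).
   3. For a single commodity, shifting load between two resources sitting at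
      the equilibrium level preserves equilibrium; with uniqueness this
      shows the equilibrium loads are nondecreasing in the demand.  Taking
      these maps as F_r gives part (b); comonotonicity follows because all
      F_r are nondecreasing in the same scalar. *)

Section Flows.
Variables (R : realType) (Res Com : finType) (S : Com -> {set Res}).
Variables (mu : Com -> R) (f : Com -> Res -> R).
Hypothesis feas : feasible_flow S mu f.

Lemma load_sumE r : load S f r = \sum_h f h r.
Proof.
case: feas => _ [f_out _]; rewrite /load big_mkcond; apply: eq_bigr => h _.
by case: ifP => // /negbT /f_out ->.
Qed.

Lemma demand_sumE h : \sum_r f h r = mu h.
Proof.
case: feas => _ [f_out <-]; rewrite [in RHS]big_mkcond; apply: eq_bigr => r _.
by case: ifP => // /negbT /f_out ->.
Qed.

Lemma load_ge0 r : 0 <= load S f r.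
Proof. by case: feas => f_ge0 _; apply: sumr_ge0 => h _; apply: f_ge0. Qed.

Lemma weighted_load_exchange (a : Res -> R) :
  \sum_r a r * load S f r = \sum_h \sum_r a r * f h r.
Proof.
under eq_bigr do rewrite load_sumE mulr_sumr.
by rewrite exchange_big.
Qed.

End Flows.

Section EquilibriumCosts.
Variables (R : realType) (Res Com : finType) (c : Res -> R -> R) (S : Com -> {set Res}).
Hypothesis c_mono : forall r s t, 0 <= s -> s <= t -> c r s <= c r t.

Lemma wardrop_variational mu f g :
  wardrop c S mu f -> feasible_flow S mu g ->
  \sum_r c r (load S f r) * load S f r <= \sum_r c r (load S f r) * load S g r.
Proof.
move=> [Ff Wf] Fg; rewrite (weighted_load_exchange Ff) (weighted_load_exchange Fg).
apply: ler_sum => h _; have [lam Hlam] := Wf h.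
have [f_ge0 [f_out _]] := Ff; have [g_ge0 [g_out _]] := Fg.
have f_cost : \sum_r c r (load S f r) * f h r = \sum_r lam * f h r.
  apply: eq_bigr => r _; case: (boolP (r \in S h)) => rS; last first.
    by rewrite f_out // !mulr0.
  have [->|fpos] := eqVneq (f h r) 0; first by rewrite !mulr0.
  by rewrite (proj1 (Hlam r rS)) // lt_def fpos f_ge0.
have f_total : \sum_r lam * f h r = \sum_r lam * g h r.
  by rewrite -!mulr_sumr (demand_sumE Ff) (demand_sumE Fg).
rewrite f_cost f_total; apply: ler_sum => r _.
case: (boolP (r \in S h)) => rS; last by rewrite g_out // !mulr0.
by rewrite ler_wpM2r // (proj2 (Hlam r rS)).
Qed.

Lemma wardrop_cost_unique mu f g :
  wardrop c S mu f -> wardrop c S mu g ->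
  forall r, c r (load S f r) = c r (load S g r).
Proof.
move=> Wf Wg.
pose a r := c r (load S f r); pose b r := c r (load S g r).
pose x := load S f; pose y := load S g.
have x_ge0 := load_ge0 (proj1 Wf); have y_ge0 := load_ge0 (proj1 Wg).
(* monotone costs: each term (a - b)(x - y) is nonnegative *)
have term_ge0 r : 0 <= (a r - b r) * (x r - y r).
  have [xy|yx] := leP (x r) (y r).
    have cxy : a r <= b r by apply: c_mono.
    by apply: mulr_le0; rewrite subr_le0.
  have cyx : b r <= a r by apply: c_mono => //; apply: ltW.
  by apply: mulr_ge0; rewrite subr_ge0 // ltW.
(* while both variational inequalities force their sum to be <= 0 *)
have sum0 : \sum_r (a r - b r) * (x r - y r) = 0.
  have V1 := wardrop_variational Wf (proj1 Wg).
  have V2 := wardrop_variational Wg (proj1 Wf).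
  apply/eqP; rewrite eq_le sumr_ge0 ?andbT //.
  have -> : \sum_r (a r - b r) * (x r - y r) =
     (\sum_r a r * x r - \sum_r a r * y r) + (\sum_r b r * y r - \sum_r b r * x r).
    rewrite -!sumrB -big_split /=; apply: eq_bigr => r _; ring.
  lra.
move=> r; have /eqP := @psumr_eq0P _ _ predT _ (fun r _ => term_ge0 r) sum0 r isT.
rewrite mulf_eq0 => /orP[|]; rewrite subr_eq0 => /eqP // xy.
by rewrite /a /b -/x -/y xy.
Qed.

End EquilibriumCosts.

Lemma sum_le_exists_lt (R : realDomainType) (I : finType) (T : {set I}) (a b : I -> R) i :
  \sum_(j in T) a j <= \sum_(j in T) b j -> i \in T -> b i < a i ->
  exists2 j, j \in T & a j < b j.
Proof.
move=> sum_le iT ba.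
case: (boolP [exists j in T, a j < b j]) => [/exists_inP[j jT ab]|]; first by exists j.
rewrite negb_exists_in => /forall_inP not_lt.
have diff_ge0 j : j \in T -> 0 <= a j - b j.
  by move=> jT; rewrite subr_ge0 leNgt; apply: not_lt.
have diff_sum0 : \sum_(j in T) (a j - b j) = 0.
  by apply/eqP; rewrite eq_le sumr_ge0 // andbT sumrB subr_le0.
have /eqP := psumr_eq0P diff_ge0 diff_sum0 iT.
by rewrite subr_eq0 => /eqP abi; move: ba; rewrite abi ltxx.
Qed.

Definition transfer (V : zmodType) (I : eqType) (y : I -> V) (r r' : I) (d : V) (q : I) : V :=
  if q == r then y r - d else if q == r' then y r' + d else y q.

Lemma sum_transfer (V : zmodType) (I : finType) (T : {set I}) (y : I -> V) r r' d :
  r \in T -> r' \in T -> r' != r ->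
  \sum_(q in T) transfer y r r' d q = \sum_(q in T) y q.
Proof.
move=> rT r'T r'r; rewrite (bigD1 r) // [in RHS](bigD1 r) //=.
rewrite (bigD1 r') /=; last by rewrite r'T r'r.
rewrite [in RHS](bigD1 r') /=; last by rewrite r'T r'r.
rewrite /transfer eqxx (negbTE r'r) eqxx.
under eq_bigr => q /andP[/andP[_ qr] qr'] do rewrite (negbTE qr) (negbTE qr').
by rewrite [y r' + d]addrC !addrA subrK.
Qed.

Section SingleCommodity.
Variables (R : realType) (Res : finType) (c : Res -> R -> R).
Hypothesis c_mono : forall r s t, 0 <= s -> s <= t -> c r s <= c r t.

Definition single_eq (T : {set Res}) (m : R) (y : Res -> R) : Prop :=
  (forall r, r \in T -> 0 <= y r) /\ \sum_(r in T) y r = m /\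
  exists lam, forall r, r \in T -> (0 < y r -> c r (y r) = lam) /\ lam <= c r (y r).

Lemma cost_squeeze r u v w l :
  0 <= u -> u <= v -> v <= w -> l <= c r u -> c r w <= l -> c r v = l.
Proof.
move=> u0 uv vw lu wl.
have cuv : c r u <= c r v by apply: c_mono.
have cvw : c r v <= c r w by apply: c_mono => //; apply: le_trans uv.
apply/eqP; rewrite eq_le; apply/andP; split; [exact: le_trans wl|exact: le_trans cuv].
Qed.

Variables (T : {set Res}) (s t : R) (y1 y2 : Res -> R).
Hypotheses (eq1 : single_eq T s y1) (eq2 : single_eq T t y2).

(* If y1 puts more load than y2 on r but less on r', moving the amount
   d = min(y1 r - y2 r, y2 r' - y1 r') from r to r' in y1 yields another
   equilibrium for the same demand s: both resources stay at the common
   equilibrium cost. *)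
Lemma single_eq_shift r r' :
  r \in T -> r' \in T -> y2 r < y1 r -> y1 r' < y2 r' ->
  exists2 z, single_eq T s z & z r < y1 r.
Proof.
move=> rT r'T lt_r lt_r'.
have [y1_ge0 [sum1 [l1 W1]]] := eq1; have [y2_ge0 [_ [l2 W2]]] := eq2.
have y2r_ge0 := y2_ge0 r rT; have y1r'_ge0 := y1_ge0 r' r'T.
have c1r : c r (y1 r) = l1 by apply: (proj1 (W1 r rT)); apply: le_lt_trans lt_r.
have c2r' : c r' (y2 r') = l2 by apply: (proj1 (W2 r' r'T)); apply: le_lt_trans lt_r'.
have levels : l1 = l2.
  have m1 : c r (y2 r) <= c r (y1 r) by apply: c_mono => //; apply: ltW.
  have m2 : c r' (y1 r') <= c r' (y2 r') by apply: c_mono => //; apply: ltW.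
  have b2 := proj2 (W2 r rT); have b1 := proj2 (W1 r' r'T).
  apply/eqP; rewrite eq_le; apply/andP; split; lra.
have neq_rr' : r' != r by apply/eqP => E; move: lt_r lt_r'; rewrite E; lra.
pose d := Order.min (y1 r - y2 r) (y2 r' - y1 r').
have d_gt0 : 0 < d by rewrite lt_min !subr_gt0 lt_r lt_r'.
have d_le1 : d <= y1 r - y2 r by rewrite ge_min lexx.
have d_le2 : d <= y2 r' - y1 r' by rewrite ge_min lexx orbT.
pose z := transfer y1 r r' d.
have zr : z r = y1 r - d by rewrite /z /transfer eqxx.
have zr' : z r' = y1 r' + d by rewrite /z /transfer (negbTE neq_rr') eqxx.
have zq q : q != r -> q != r' -> z q = y1 q.
  by move=> qr qr'; rewrite /z /transfer (negbTE qr) (negbTE qr').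
have czr : c r (z r) = l1.
  apply: (cost_squeeze (u := y2 r) (w := y1 r)); rewrite ?zr ?c1r //; try lra.
  by rewrite levels; apply: (proj2 (W2 r rT)).
have czr' : c r' (z r') = l1.
  apply: (cost_squeeze (u := y1 r') (w := y2 r')); rewrite ?zr' ?c2r' -?levels //; try lra.
  exact: (proj2 (W1 r' r'T)).
exists z; last by rewrite zr; lra.
split.
  move=> q qT; case: (eqVneq q r) => [->|qr]; first by rewrite zr; lra.
  case: (eqVneq q r') => [->|qr']; first by rewrite zr'; lra.
  by rewrite zq //; apply: y1_ge0.
split; first by rewrite sum_transfer.
exists l1 => q qT.
case: (eqVneq q r) => [->|qr]; first by rewrite czr.
case: (eqVneq q r') => [->|qr']; first by rewrite czr'.
by rewrite zq //; apply: W1.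
Qed.

Lemma single_eq_mono r :
  s <= t ->
  (forall y y', single_eq T s y -> single_eq T s y' -> forall q, q \in T -> y q = y' q) ->
  r \in T -> y1 r <= y2 r.
Proof.
move=> st unique rT; rewrite leNgt; apply/negP => lt_r.
have sum_le : \sum_(q in T) y1 q <= \sum_(q in T) y2 q.
  by case: eq1 => _ [-> _]; case: eq2 => _ [-> _].
have [r' r'T lt_r'] := sum_le_exists_lt sum_le rT lt_r.
have [z eqz zr] := single_eq_shift rT r'T lt_r lt_r'.
by move: zr; rewrite (unique _ _ eq1 eqz r rT) ltxx.
Qed.

End SingleCommodity.

Section ClassGame.
Variables (R : realType) (Res Com : finType) (c : Res -> R -> R) (S : Com -> {set Res}).
Variables (le : rel Com) (C : {set Com}).

Lemma load_SC (f : unit -> Res -> R) r :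
  load (SC S le C) f r = if r \in RC S le C then f tt r else 0.
Proof.
rewrite /load /SC; case: ifP => rC; last by rewrite big_pred0_eq.
by apply: big_pred1 => -[].
Qed.

Lemma eq_load_CP m y : eq_load_C c S le C m y <-> single_eq c (RC S le C) m y.
Proof.
split.
  move=> [z [[f [[[f_ge0 [_ f_sum]] Wf] z_load]] zy]].
  have yf r : r \in RC S le C -> y r = f tt r.
    by move=> rC; rewrite -zy // z_load load_SC rC.
  split; first by move=> r rC; rewrite yf.
  split; first by rewrite -(f_sum tt); apply: eq_bigr => r /yf.
  have [lam W] := Wf tt; exists lam => r rC.
  by have := W r rC; rewrite load_SC rC -yf.
move=> [y_ge0 [y_sum [lam W]]].
pose f (_ : unit) r := if r \in RC S le C then y r else 0.
have load_f r : r \in RC S le C -> load (SC S le C) f r = y r.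
  by move=> rC; rewrite load_SC rC /f rC.
exists (load (SC S le C) f); split; last exact: load_f.
exists f; split => //; split.
  split; first by move=> u r; rewrite /f; case: ifP => // rC; apply: y_ge0.
  split; first by move=> u r /negbTE rC; rewrite /f rC.
  by move=> u; rewrite -y_sum; apply: eq_bigr => r rC; rewrite /f rC.
by move=> u; exists lam => r rC; rewrite load_f // /f rC; apply: W.
Qed.

End ClassGame.

Lemma gamma_levels (R : realType) (Res Com : finType) (c : Res -> R -> R)
    (S : Com -> {set Res}) (le : rel Com) mu f :
  (forall r s t, 0 <= s -> s <= t -> c r s <= c r t) ->
  Gamma c S le mu -> wardrop c S mu f ->
  exists lam : Com -> R, (forall h h', lam h <= lam h' <-> le h h') /\
    (forall h r, r \in S h -> lam h <= c r (load S f r)) /\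
    (forall h r, r \in S h -> 0 < f h r -> c r (load S f r) = lam h).
Proof.
move=> c_mono [_ [x0 [lam [[g [Wg gx0]] [lam_cost lam_order]]]]] Wf.
have same_cost := wardrop_cost_unique c_mono Wf Wg.
have lam_lb h r : r \in S h -> lam h <= c r (load S f r).
  by move=> rS; rewrite same_cost -gx0; apply: (proj2 (lam_cost h)).
exists lam; split => //; split => // h r rS f_pos.
have [[r0 r0S cost_r0] _] := lam_cost h; rewrite gx0 -same_cost in cost_r0.
have [l Wl] := proj2 Wf h.
apply/eqP; rewrite eq_le lam_lb // andbT -cost_r0 (proj1 (Wl r rS) f_pos).
exact: (proj2 (Wl r0 r0S)).
Qed.

Section ClassFlows.
Variables (R : realType) (Res Com : finType) (c : Res -> R -> R) (S : Com -> {set Res}).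
Variables (le : rel Com) (C : {set Com}) (h0 : Com).
Hypothesis le_weak : weak_order le.
Hypothesis C_def : C = [set h | le h h0 && le h0 h]%SET.
Variables (mu : Com -> R) (f : Com -> Res -> R) (lam : Com -> R).
Hypothesis feas : feasible_flow S mu f.
Hypothesis lam_order : forall h h', lam h <= lam h' <-> le h h'.
Hypothesis lam_lb : forall h r, r \in S h -> lam h <= c r (load S f r).
Hypothesis lam_used : forall h r, r \in S h -> 0 < f h r -> c r (load S f r) = lam h.

Lemma class_level h : h \in C -> lam h = lam h0.
Proof.
rewrite C_def inE => /andP[hh0 h0h]; apply/eqP.
by rewrite eq_le (proj2 (lam_order _ _) hh0) (proj2 (lam_order _ _) h0h).
Qed.

Lemma level_lt h h' : le h h' -> ~~ le h' h -> lam h < lam h'.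
Proof.
move=> hh' /negP h'h; rewrite lt_neqAle (proj2 (lam_order _ _) hh') andbT.
by apply/negP => /eqP E; apply: h'h; apply: (proj1 (lam_order _ _)); rewrite E.
Qed.

Lemma above_level h' : above_class le C h' -> lam h0 < lam h'.
Proof.
by move=> /existsP[h /andP[hC /andP[hh' h'h]]]; rewrite -(class_level hC) level_lt.
Qed.

Lemma below_level h' : h' \notin C -> ~~ above_class le C h' -> lam h' < lam h0.
Proof.
have [le_total _] := le_weak.
move=> h'C not_above; have [h'h0|not_h'h0] := boolP (le h' h0).
  by apply: level_lt => //; apply: contra h'C => h0h'; rewrite C_def inE h'h0 h0h'.
have h0C : h0 \in C by rewrite C_def inE andbb; have := le_total h0 h0; rewrite orbb.
case/negP: not_above; apply/existsP; exists h0; rewrite h0C not_h'h0 andbT /=.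
by have := le_total h' h0; rewrite (negbTE not_h'h0).
Qed.

(* Every resource of R_C is available to C, so it costs at least lam h0. *)
Lemma RC_cost_lb r : r \in RC S le C -> lam h0 <= c r (load S f r).
Proof.
by rewrite inE => /andP[_ /bigcupP[h hC rS]]; rewrite -(class_level hC) lam_lb.
Qed.

Lemma flow_pos_or_zero h r : f h r = 0 \/ 0 < f h r.
Proof. by have [f_ge0 _] := feas; rewrite lt_def f_ge0 andbT; case: eqVneq; auto. Qed.

Lemma RC_used_by_class h r : r \in RC S le C -> h \notin C -> f h r = 0.
Proof.
move=> rC hC; have [f_out _] := feas.2.
have [//|f_pos] := flow_pos_or_zero h r.
case: (boolP (r \in S h)) => rS; last exact: f_out.
case: (boolP (above_class le C h)) => [above|not_above].
  move: rC; rewrite inE => /andP[/bigcupP nabove _]; case: nabove; by exists h.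
have := below_level hC not_above; have := RC_cost_lb rC.
by rewrite (lam_used rS f_pos); lra.
Qed.

Lemma class_uses_RC h r : h \in C -> r \notin RC S le C -> f h r = 0.
Proof.
move=> hC rC; have [f_out _] := feas.2.
have [//|f_pos] := flow_pos_or_zero h r.
case: (boolP (r \in S h)) => rS; last exact: f_out.
move: rC; rewrite inE negb_and negbK => /orP[/bigcupP[h' above rS']|]; last first.
  by case/bigcupP; exists h.
have := above_level above; have := lam_lb rS'.
by rewrite (lam_used rS f_pos) (class_level hC); lra.
Qed.

Lemma class_single_eq : single_eq c (RC S le C) (\sum_(h in C) mu h) (load S f).
Proof.
have class_load r : r \in RC S le C -> load S f r = \sum_(h in C) f h r.
  move=> rC; rewrite (load_sumE feas) [RHS]big_mkcond; apply: eq_bigr => h _.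
  by case: ifP => // /negbT /(RC_used_by_class rC).
split; first by move=> r _; apply: load_ge0 feas r.
split.
  rewrite (eq_bigr _ class_load) exchange_big; apply: eq_bigr => h hC.
  rewrite -(demand_sumE feas h) big_mkcond; apply: eq_bigr => r _.
  by case: ifP => // /negbT /(class_uses_RC hC) ->.
exists (lam h0) => r rC; split; last exact: RC_cost_lb.
rewrite class_load // => load_pos.
have [h hC f_pos] : exists2 h, h \in C & 0 < f h r.
  apply/exists_inP; apply: contraTT load_pos; rewrite negb_exists_in => /forall_inP.
  move=> not_pos; rewrite big1 ?ltxx // => h hC.
  by have [//|f_pos] := flow_pos_or_zero h r; move: (not_pos h hC); rewrite f_pos.
have [f_out _] := feas.2.
case: (boolP (r \in S h)) => rS; last by move: f_pos; rewrite f_out ?ltxx.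
by rewrite -class_load // (lam_used rS f_pos) class_level.
Qed.

End ClassFlows.

Lemma gamma_single_eq (R : realType) (Res Com : finType) (c : Res -> R -> R)
    (S : Com -> {set Res}) (le : rel Com) (C : {set Com}) mu x :
  (forall r s t, 0 <= s -> s <= t -> c r s <= c r t) ->
  weak_order le -> cost_class le C ->
  Gamma c S le mu -> eq_load c S mu x ->
  single_eq c (RC S le C) (\sum_(h in C) mu h) x.
Proof.
move=> c_mono le_weak [h0 C_def] G [f [Wf x_load]].
have [lam [lam_order [lam_lb lam_used]]] := gamma_levels c_mono G Wf.
have -> : x = load S f by apply/funext.
exact: (class_single_eq (c := c) (lam := lam) le_weak C_def (proj1 Wf) lam_order lam_lb lam_used).
Qed.

Lemma monotone_equilibrium_map (R : realType) (Res : finType) (c : Res -> R -> R)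
    (T : {set Res}) :
  (forall r s t, 0 <= s -> s <= t -> c r s <= c r t) ->
  (forall m, 0 <= m -> (exists y, single_eq c T m y) /\
     (forall y1 y2, single_eq c T m y1 -> single_eq c T m y2 ->
        forall r, r \in T -> y1 r = y2 r)) ->
  exists F : Res -> R -> R, (forall m, 0 <= m -> single_eq c T m (fun r => F r m)) /\
    (forall r, r \in T -> forall s t, 0 <= s -> s <= t -> F r s <= F r t).
Proof.
move=> c_mono unique_eq.
have [g g_eq] : {g : R -> Res -> R & forall m, 0 <= m -> single_eq c T m (g m)}.
  apply: (@choice R (Res -> R) (fun m y => 0 <= m -> single_eq c T m y)) => m.
  case: (boolP (0 <= m)) => [m0|m_neg]; last by exists (fun _ => 0) => m0; move/negP: m_neg.
  by have [[y Ey] _] := unique_eq m m0; exists y.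
exists (fun r m => g m r); split => // r rT s t s0 st.
apply: (single_eq_mono c_mono (g_eq s s0) (g_eq t (le_trans s0 st)) st _ rT).
exact: (unique_eq s s0).2.
Qed.

Lemma nondecreasing_comonotone (R : realDomainType) (F G : R -> R) s t :
  (forall u v, 0 <= u -> u <= v -> F u <= F v) ->
  (forall u v, 0 <= u -> u <= v -> G u <= G v) ->
  0 <= s -> 0 <= t -> 0 <= (F s - F t) * (G s - G t).
Proof.
move=> F_mono G_mono s0 t0; have [st|ts] := leP s t.
  by apply: mulr_le0; rewrite subr_le0; [apply: F_mono|apply: G_mono].
by apply: mulr_ge0; rewrite subr_ge0; [apply: F_mono|apply: G_mono]; rewrite // ltW.
Qed.

Unset Implicit Arguments.

Theorem theorem4p1 (R : realType) (Res Com : finType)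
  (c : Res -> R -> R) (S : Com -> {set Res}) (le : rel Com) (C : {set Com}) :
  good_costs c ->
  (forall h, exists r, r \in S h) ->
  weak_order le ->
  cost_class le C ->
  (* (a) *)
  (forall (mu : Com -> R) (x : Res -> R),
     Gamma c S le mu -> eq_load c S mu x ->
     eq_load_C c S le C (\sum_(h in C) mu h) x) /\
  (* (b) *)
  ((forall m : R, 0 <= m ->
      (exists y, eq_load_C c S le C m y) /\
      (forall y1 y2, eq_load_C c S le C m y1 -> eq_load_C c S le C m y2 ->
         forall r, r \in RC S le C -> y1 r = y2 r)) ->
   (forall mu x1 x2, Gamma c S le mu -> eq_load c S mu x1 -> eq_load c S mu x2 ->
      forall r, r \in RC S le C -> x1 r = x2 r) /\
   (exists F : Res -> R -> R,
      (forall r, r \in RC S le C ->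
         forall s t, 0 <= s -> s <= t -> F r s <= F r t) /\
      (forall mu x, Gamma c S le mu -> eq_load c S mu x ->
         forall r, r \in RC S le C -> x r = F r (\sum_(h in C) mu h))) /\
   (forall mu1 mu2 x1 x2, Gamma c S le mu1 -> Gamma c S le mu2 ->
      eq_load c S mu1 x1 -> eq_load c S mu2 x2 ->
      forall r r', r \in RC S le C -> r' \in RC S le C ->
        0 <= (x1 r - x2 r) * (x1 r' - x2 r'))).
Proof.
move=> costs _ le_weak C_class.
have c_mono r : forall s t, 0 <= s -> s <= t -> c r s <= c r t by case: (costs r) => _ [].
have partA mu x := @gamma_single_eq _ _ _ c S le C mu x c_mono le_weak C_class.
split=> [mu x G E|unique_C]; first by apply/eq_load_CP; apply: partA.
have unique_eq m : 0 <= m -> (exists y, single_eq c (RC S le C) m y) /\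
    (forall y1 y2, single_eq c (RC S le C) m y1 -> single_eq c (RC S le C) m y2 ->
       forall r, r \in RC S le C -> y1 r = y2 r).
  move=> m0; have [[y /eq_load_CP Ey] U] := unique_C m m0.
  by split=> [|y1 y2 /eq_load_CP E1 /eq_load_CP E2]; [exists y|apply: U].
have [F [F_eq F_mono]] := monotone_equilibrium_map c_mono unique_eq.
have demand_ge0 mu : Gamma c S le mu -> 0 <= \sum_(h in C) mu h.
  by move=> [mu_ge0 _]; apply: sumr_ge0.
have F_rep mu x r : Gamma c S le mu -> eq_load c S mu x -> r \in RC S le C ->
    x r = F r (\sum_(h in C) mu h).
  move=> G E rC; have m0 := demand_ge0 mu G.
  exact: (unique_eq _ m0).2 _ _ (partA mu x G E) (F_eq _ m0) r rC.
split; first by move=> mu x1 x2 G E1 E2 r rC; rewrite (F_rep mu x1 r) ?(F_rep mu x2 r).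
split; first by exists F; split=> // mu x G E r; apply: F_rep.
move=> mu1 mu2 x1 x2 G1 G2 E1 E2 r r' rC r'C.
rewrite (F_rep mu1 x1 r) ?(F_rep mu1 x1 r') ?(F_rep mu2 x2 r) ?(F_rep mu2 x2 r') //.
by apply: nondecreasing_comonotone; [apply: F_mono|apply: F_mono|apply: demand_ge0..].
Qed.
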